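(* Let $\Omega\subset\mathbb{R}^2$ be a bounded, simply connected domain with $C^{2+\epsilon}$ boundary, let $\lambda_j$ be any eigenvalue of $-\Delta$ on $\Omega$ with homogeneous Dirichlet boundary condition, with eigenfunction $\phi_j$, and set $P_+=\int_{\Omega_+}\phi_j\,dx$ and $P_-=-\int_{\Omega_-}\phi_j\,dx$, where $\Omega_\pm=\{x\in\Omega:\pm\phi_j(x)>0\}$. Consider $f(\varphi)=\lambda_j\varphi+\vartheta(\varphi)$ with $\vartheta\colon\mathbb{R}\to\mathbb{R}$ satisfying $0<A<\vartheta(\eta)<B$ for all $\eta$, for some constants $A,B$. If $P_+\neq P_-$, then for some ranges of $A$ and $B$ (i.e. there exist constants $0<A<B$ such that for every such $\vartheta$) the problem $-\Delta\varphi=f(\varphi)$ in $\Omega$, $\varphi=0$ on $\partial\Omega$, has no solution $\varphi\in H^1_0(\Omega)$ (with $f(\varphi)\in L^2(\Omega)$, the equation holding weakly). *)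

(* Points of R^2 are pairs (x1, x2) : R * R,
   with the product (max) norm; Lebesgue measure on R^2 is the product
   measure of the Lebesgue measure on R with itself. *)
From HB Require Import structures.
From mathcomp Require Import all_boot all_order all_algebra.
From mathcomp Require Import all_classical all_reals all_analysis.
Set Implicit Arguments.
Unset Strict Implicit.
Unset Printing Implicit Defensive.
Import Order.TTheory GRing.Theory Num.Theory.
Import numFieldNormedType.Exports.
Local Open Scope classical_set_scope.
Local Open Scope ring_scope.

Section Defs.
Variable R : realType.

Definition leb2 := ((@lebesgue_measure R) \x (@lebesgue_measure R))%E.

Definition e1 : R * R := (1, 0).
Definition e2 : R * R := (0, 1).

Fixpoint iter_dderiv (l : seq (R * R)) (f : R * R -> R) : R * R -> R :=
  match l with
  | [::] => f
  | v :: l' => 'D_v (iter_dderiv l' f)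
  end.

Definition smooth2 (f : R * R -> R) : Prop :=
  forall (l : seq (R * R)) (x : R * R), differentiable (iter_dderiv l f) x.

Definition test_fun (Om : set (R * R)) (psi : R * R -> R) : Prop :=
  smooth2 psi /\
  exists K : set (R * R), compact K /\ K `<=` Om /\
    (forall x, ~ K x -> psi x = 0).

Definition L2 (Om : set (R * R)) (f : R * R -> R) : Prop :=
  measurable_fun Om f /\ leb2.-integrable Om (fun x => (f x ^+ 2)%:E).

Definition weak_deriv (Om : set (R * R)) (v : R * R) (u g : R * R -> R) : Prop :=
  forall psi, test_fun Om psi ->
    Rintegral leb2 Om (fun x => u x * 'D_v psi x)
    = - Rintegral leb2 Om (fun x => g x * psi x).

(* u in H^1_0(Omega) with weak gradient (g1, g2): u in H^1(Omega) and u is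
   an H^1-limit of C_c^infinity(Omega) functions *)
Definition H10_grad (Om : set (R * R)) (u g1 g2 : R * R -> R) : Prop :=
  [/\ L2 Om u /\ L2 Om g1 /\ L2 Om g2, weak_deriv Om e1 u g1, weak_deriv Om e2 u g2 &
  (exists psi : nat -> R * R -> R, (forall n, test_fun Om (psi n)) /\
    (fun n => (\int[leb2]_(x in Om)
        ((psi n x - u x) ^+ 2 + ('D_e1 (psi n) x - g1 x) ^+ 2
          + ('D_e2 (psi n) x - g2 x) ^+ 2)%:E)%E) @ \oo --> 0%E)].

Definition weak_neg_laplacian (Om : set (R * R)) (g1 g2 h : R * R -> R) : Prop :=
  forall psi, test_fun Om psi ->
    Rintegral leb2 Om (fun x => g1 x * 'D_e1 psi x + g2 x * 'D_e2 psi x)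
    = Rintegral leb2 Om (fun x => h x * psi x).

Definition dirichlet_eigenpair (Om : set (R * R)) (lam : R) (phi : R * R -> R) : Prop :=
  exists g1 g2, [/\ H10_grad Om phi g1 g2,
    (\int[leb2]_(x in Om) (phi x ^+ 2)%:E != 0)%E &
    weak_neg_laplacian Om g1 g2 (fun x => lam * phi x)].

Definition weak_dirichlet_solution (Om : set (R * R)) (f : R -> R) (phi : R * R -> R) : Prop :=
  exists g1 g2, [/\ H10_grad Om phi g1 g2, L2 Om (fun x => f (phi x)) &
    weak_neg_laplacian Om g1 g2 (fun x => f (phi x))].

Definition bounded_set2 (Om : set (R * R)) : Prop :=
  exists M : R, forall x, Om x -> `|x| <= M.

Definition I01 : set R := [set t : R | 0 <= t <= 1].

(* simply connected: path-connected (connected open) and every closed loop in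
   Omega is freely homotopic within Omega to a constant loop *)
Definition simply_connected2 (Om : set (R * R)) : Prop :=
  connected Om /\
  forall gam : R -> R * R,
    {within I01, continuous gam} -> gam @` I01 `<=` Om -> gam 0 = gam 1 ->
    exists H : R * R -> R * R,
      [/\ {within I01 `*` I01, continuous H},
          H @` (I01 `*` I01) `<=` Om,
          (forall s, 0 <= s <= 1 -> H (s, 0) = gam s),
          (forall s, 0 <= s <= 1 -> H (s, 1) = H (0, 1)) &
          (forall t, 0 <= t <= 1 -> H (0, t) = H (1, t))].

Definition C2_holder (eps : R) (h : R -> R) : Prop :=
  (forall t, derivable h t 1) /\ (forall t, derivable (derive1 h) t 1) /\
  exists C : R, forall s t, `|derive1 (derive1 h) s - derive1 (derive1 h) t| <= C * (`|s - t| `^ eps).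

(* Omega has C^{2+eps} boundary: near each boundary point, in suitably rotated
   coordinates centred at that point, Omega is the strict epigraph of a
   C^{2,eps} function *)
Definition C2eps_boundary (eps : R) (Om : set (R * R)) : Prop :=
  forall p, closure Om p -> ~ Om p ->
    exists (r c s : R) (h : R -> R),
      [/\ 0 < r, c ^+ 2 + s ^+ 2 = 1, C2_holder eps h &
        forall x, ball p r x ->
          (Om x <-> h (c * (x.1 - p.1) + s * (x.2 - p.2))
                      < - s * (x.1 - p.1) + c * (x.2 - p.2))].

End Defs.

From HB Require Import structures.
From mathcomp Require Import all_boot all_order all_algebra.
From mathcomp Require Import all_classical all_reals all_analysis.
From mathcomp Require Import ring lra measurable_realfun.
Set Implicit Arguments.
Unset Strict Implicit.
Unset Printing Implicit Defensive.
Import Order.TTheory GRing.Theory Num.Theory.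
Import numFieldNormedType.Exports.
Local Open Scope classical_set_scope.
Local Open Scope ring_scope.

(* Testing the eigenvalue equation against a solution [phi] and the perturbed
   equation against [phi_j] (legitimate for H^1_0 functions by density of test
   functions) makes the gradient terms cancel: the integral of [vt(phi) phi_j]
   vanishes.  As [A < vt < B], this forces [A P+ <= B P-] and [A P- <= B P+],
   where [P-] is the (positive) mass of the negative part of [phi_j].  So if
   [P+ <> P-], the choice [A = 1] and [B > 1] close enough to [1] leaves no
   solution. *)

Lemma exists_ratr_near (R : realType) (x r : R) : 0 < r ->
  exists a : rat, x - r < ratr a < x + r.
Proof.
move=> r0; have [|a] := @rat_in_itvoo R (x - r) (x + r); first lra.
by rewrite in_itv /=; exists a.
Qed.

Lemma exists_gt1_mulr_lt (R : realFieldType) (p q : R) : p < q ->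
  exists2 B : R, 1 < B & B * p < q.
Proof.
move=> pq; have n0 : 0 < `|p| + 1 by have := normr_ge0 p; lra.
set k := (q - p) / (2 * (`|p| + 1)).
have k0 : 0 < k by rewrite divr_gt0 ?mulr_gt0; lra.
have kp : k * p < q - p.
  have e : k * (2 * (`|p| + 1)) = q - p by rewrite /k divfK // gt_eqF ?mulr_gt0.
  have := ler_norm p; have := ler_normr p (- p); nra.
by exists (1 + k); nra.
Qed.

Lemma mulr_between_maxmin (R : realDomainType) (A B t p : R) : A < t < B ->
  A * Order.max p 0 + B * Order.min p 0 <= t * p <= B * Order.max p 0 + A * Order.min p 0.
Proof. by move=> /andP[At tB]; have [p0|p0] := lerP 0 p; apply/andP; split; nra. Qed.

Lemma normr_mul_le_amgm (R : realFieldType) (c a b : R) : 0 < c ->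
  `|a * b| <= c / 2 * a ^+ 2 + c^-1 / 2 * b ^+ 2.
Proof.
move=> c0; have ci : 0 < c^-1 by rewrite invr_gt0.
have ep : c^-1 * (c * a + b) ^+ 2 = c * a ^+ 2 + 2 * a * b + c^-1 * b ^+ 2.
  by field; rewrite gt_eqF.
have em : c^-1 * (c * a - b) ^+ 2 = c * a ^+ 2 - 2 * a * b + c^-1 * b ^+ 2.
  by field; rewrite gt_eqF.
have := mulr_ge0 (ltW ci) (sqr_ge0 (c * a + b)).
have := mulr_ge0 (ltW ci) (sqr_ge0 (c * a - b)).
by rewrite ler_norml; move=> *; apply/andP; split; lra.
Qed.

Section measurable_plane.
Variable R : realType.
Local Notation R2 := (measurableTypeR R * measurableTypeR R)%type.

(* Every open set of the plane is a countable union of balls (i.e. squares)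
   with rational centres and radii [1 / (n + 1)]. *)
Lemma open_measurable2 (U : set R2) : open (U : set (R * R)) -> measurable U.
Proof.
move=> oU.
pose box (i : rat * rat * nat) : set (R * R) :=
  ball ((ratr i.1.1, ratr i.1.2) : R * R) (i.2.+1%:R^-1).
pose F (i : rat * rat * nat) : set R2 := [set z | box i `<=` U /\ box i z].
have -> : U = \bigcup_i F i.
  apply/seteqP; split => [z Uz|z [i _ [sU bz]]]; last exact: sU.
  have /nbhs_ballP[e /= e0 zeU] : nbhs (z : R * R) U by apply: oU.
  have [n ne] : exists n : nat, n.+1%:R^-1 < e / 2.
    have [|n] := @ltr_add_invr R 0 (e / 2); first by rewrite divr_gt0.
    by rewrite add0r; exists n.
  have n0 : (0 : R) < n.+1%:R^-1 by rewrite invr_gt0 ltr0Sn.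
  set r := n.+1%:R^-1 in ne n0 *.
  have [a /andP[a1 a2]] := @exists_ratr_near R z.1 r n0.
  have [b /andP[b1 b2]] := @exists_ratr_near R z.2 r n0.
  exists (a, b, n) => //; split.
    move=> w [/= w1 w2]; apply: zeU; split => /=;
      move: w1 w2; rewrite /ball /= -/r !ltr_distl => /andP[? ?] /andP[? ?];
      apply/andP; split; lra.
  by split; rewrite /ball /= -/r ltr_distl; apply/andP; split; lra.
apply: countable_bigcupT_measurable => // i.
have [sU|nsU] := pselect (box i `<=` U).
  rewrite (_ : F i = box i); last by apply/seteqP; split => z //= [].
  by apply: measurableX; exact: measurable_ball.
by rewrite (_ : F i = set0) //; apply/seteqP; split => z //= [].
Qed.

Lemma continuous_measurable_fun2 (D : set R2) (f : R * R -> R) :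
  measurable D -> continuous f -> measurable_fun D f.
Proof.
move=> mD /continuousP cf; apply: (measurability _ (RGenOpens.measurableE R)).
move=> _ [_ [a [b ->] <-]]; apply: measurableI => //; apply: open_measurable2.
exact/cf/interval_open.
Qed.

Lemma test_fun_measurable (Om : set R2) (psi : R * R -> R) :
  measurable Om -> test_fun Om psi ->
  [/\ measurable_fun Om psi, measurable_fun Om ('D_(e1 R) psi)
    & measurable_fun Om ('D_(e2 R) psi)].
Proof.
move=> mOm [sm _]; split; apply: continuous_measurable_fun2 => // x;
  apply: differentiable_continuous.
- exact: (sm [::] x).
- exact: (sm [:: e1 R] x).
- exact: (sm [:: e2 R] x).
Qed.

End measurable_plane.

Section square_integrable.
Context d (T : measurableType d) (R : realType) (mu : {measure set T -> \bar R}).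
Variables (D : set T) (mD : measurable D).

Definition square_integrable (f : T -> R) :=
  measurable_fun D f /\ mu.-integrable D (fun x => (f x ^+ 2)%:E).

Lemma integrableZl_EFin k f : mu.-integrable D (EFin \o f) ->
  mu.-integrable D (EFin \o (fun x => k * f x)).
Proof. by move=> /(integrableZl mD k); apply: eq_integrable. Qed.

Lemma integrableD_EFin f g :
  mu.-integrable D (EFin \o f) -> mu.-integrable D (EFin \o g) ->
  mu.-integrable D (EFin \o (fun x => f x + g x)).
Proof. by move=> If Ig; apply: eq_integrable (integrableD mD If Ig). Qed.


Lemma integrable_mul_square_integrable u v :
  square_integrable u -> square_integrable v ->
  mu.-integrable D (EFin \o (fun x => u x * v x)).
Proof.
move=> [mu' iu] [mv iv].
apply: (le_integrable mD _ _ (integrableD mD iu iv)).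
  by apply/measurable_EFinP; exact: measurable_funM.
move=> x Dx /=; rewrite lee_fin [X in _ <= X]ger0_norm ?addr_ge0 ?sqr_ge0 //.
have := sqr_ge0 (u x); have := sqr_ge0 (v x).
by have := @normr_mul_le_amgm _ 1 (u x) (v x) ltr01; rewrite invr1; lra.
Qed.

Lemma square_integrable_le (h G : T -> R) : measurable_fun D h ->
  mu.-integrable D (EFin \o G) -> (forall x, D x -> h x ^+ 2 <= G x) ->
  square_integrable h.
Proof.
move=> mh iG hG; split => //; apply: (le_integrable mD _ _ iG).
  by apply/measurable_EFinP; exact: measurable_funX.
move=> x Dx /=; rewrite lee_fin !ger0_norm ?sqr_ge0 ?hG //.
exact: le_trans (sqr_ge0 _) (hG x Dx).
Qed.

Lemma le_Rintegral_normr_mul (c : R) (v h G : T -> R) : 0 < c ->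
  square_integrable v -> measurable_fun D h -> mu.-integrable D (EFin \o G) ->
  (forall x, D x -> h x ^+ 2 <= G x) ->
  Rintegral mu D (fun x => `|v x * h x|)
    <= c / 2 * Rintegral mu D (fun x => v x ^+ 2) + c^-1 / 2 * Rintegral mu D G.
Proof.
move=> c0 Lv mh iG hG; have Lh := square_integrable_le mh iG hG.
have ivh := integrable_mul_square_integrable Lv Lh.
have iv2 : mu.-integrable D (EFin \o (fun x => v x ^+ 2)) by case: Lv.
rewrite -(RintegralZl _ mD iv2) -(RintegralZl _ mD iG) -RintegralD //;
  try exact: integrableZl_EFin.
apply: le_Rintegral => //; first exact: integrable_norm ivh.
  by apply: integrableD_EFin; exact: integrableZl_EFin.
move=> x Dx /=; apply: le_trans (normr_mul_le_amgm _ _ c0) _.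
by rewrite lerD2l ler_wpM2l ?hG // divr_ge0 // ltW // invr_gt0.
Qed.

Lemma cvg0_integral_integrable (G : nat -> T -> R) :
  (forall n, measurable_fun D (G n)) -> (forall n x, D x -> 0 <= G n x) ->
  (fun n => \int[mu]_(x in D) (G n x)%:E)%E @ \oo --> 0%E ->
  \forall n \near \oo, mu.-integrable D (EFin \o G n).
Proof.
move=> mG G0 /fine_cvgP[finG _]; near=> n.
apply/integrableP; split; first exact/measurable_EFinP.
have -> : (\int[mu]_(x in D) `|(EFin \o G n) x|)%E = (\int[mu]_(x in D) (G n x)%:E)%E.
  by apply: eq_integral => x /[1!inE] Dx /=; rewrite ger0_norm // G0.
rewrite -ge0_fin_numE; first by near: n.
by apply: integral_ge0 => x Dx; rewrite lee_fin G0.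
Unshelve. all: by end_near.
Qed.

Lemma square_integrable_near (h f G : T -> R) : measurable_fun D h ->
  square_integrable f -> mu.-integrable D (EFin \o G) ->
  (forall x, D x -> (h x - f x) ^+ 2 <= G x) -> square_integrable h.
Proof.
move=> mh [mf if2] iG hfG; apply: (square_integrable_le mh (G := fun x => 2 * G x + 2 * f x ^+ 2)).
  by apply: integrableD_EFin; apply: integrableZl_EFin.
by move=> x Dx; have := hfG x Dx; have := sqr_ge0 (h x - 2 * f x); nra.
Qed.

Lemma le_dist_Rintegral_mul (c : R) (h f v G : T -> R) : 0 < c ->
  square_integrable h -> square_integrable f -> square_integrable v ->
  mu.-integrable D (EFin \o G) -> (forall x, D x -> (h x - f x) ^+ 2 <= G x) ->
  `|Rintegral mu D (fun x => v x * h x) - Rintegral mu D (fun x => v x * f x)|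
    <= c / 2 * Rintegral mu D (fun x => v x ^+ 2) + c^-1 / 2 * Rintegral mu D G.
Proof.
move=> c0 Lh Lf Lv iG hfG.
have mhf : measurable_fun D (fun x => h x - f x) by apply: measurable_funB; [case: Lh|case: Lf].
have Lhf := square_integrable_le mhf iG hfG.
rewrite -RintegralB //; try by apply: integrable_mul_square_integrable.
rewrite (eq_Rintegral _ (fun x _ => esym (mulrBr (v x) (h x) (f x)))).
apply: le_trans (le_normr_Rintegral mD (integrable_mul_square_integrable Lv Lhf)) _.
exact: le_Rintegral_normr_mul.
Qed.

Lemma cvg_Rintegral_mul (F G : nat -> T -> R) (f v : T -> R) :
  (forall n, measurable_fun D (F n)) -> (forall n, measurable_fun D (G n)) ->
  square_integrable f -> square_integrable v ->
  (forall n x, D x -> (F n x - f x) ^+ 2 <= G n x) ->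
  (fun n => \int[mu]_(x in D) (G n x)%:E)%E @ \oo --> 0%E ->
  (\forall n \near \oo, mu.-integrable D (EFin \o (fun x => v x * F n x))) /\
  (fun n => Rintegral mu D (fun x => v x * F n x)) @ \oo
     --> Rintegral mu D (fun x => v x * f x).
Proof.
move=> mF mG Lf Lv FG cvG.
have G0 n x : D x -> 0 <= G n x by move=> Dx; exact: le_trans (sqr_ge0 _) (FG n x Dx).
have iG := cvg0_integral_integrable mG G0 cvG.
have LF : \forall n \near \oo, square_integrable (F n).
  by near=> n; apply: (square_integrable_near (mF n) Lf _ (FG n)); near: n.
split; first by near=> n; apply: integrable_mul_square_integrable Lv _; near: n.
have /fine_cvgP[_ cvGR] := cvG.
apply/cvgrPdist_lt => e e0.
set V := Rintegral mu D (fun x => v x ^+ 2).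
have V0 : 0 <= V by apply: Rintegral_ge0 => x _; exact: sqr_ge0.
pose c := e / (V + 1).
have c0 : 0 < c by rewrite divr_gt0 //; lra.
have cV : c * V < e by rewrite /c mulrAC ltr_pdivrMr; [nra | lra].
move/cvgrPdist_lt : cvGR => /(_ (e * c) (mulr_gt0 e0 c0)) smallG.
near=> n.
have Gc : c^-1 * Rintegral mu D (G n) < e.
  have : `|0 - Rintegral mu D (G n)| < e * c by near: n.
  by rewrite sub0r normrN => /ltr_normlW Gec; rewrite mulrC ltr_pdivrMr.
rewrite distrC; apply: le_lt_trans (le_dist_Rintegral_mul c0 _ Lf Lv _ (FG n)) _.
- by near: n.
- by near: n.
- by rewrite -/V; clearbody c; lra.
Unshelve. all: by end_near.
Qed.

End square_integrable.

Section sign_parts.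
Context d (T : measurableType d) (R : realType) (mu : {measure set T -> \bar R}).
Variables (D : set T) (mD : measurable D).

Lemma Rintegral_setI_gt0 (f : T -> R) :
  Rintegral mu (D `&` [set x | 0 < f x]) f
  = Rintegral mu D (fun x => Order.max (f x) 0).
Proof.
rewrite Rintegral_mkcondr; apply: eq_Rintegral => x _; rewrite /patch.
case: ifPn => [/set_mem /= f0|fN0]; first by rewrite max_l // ltW.
by rewrite max_r // leNgt; apply: contraNN fN0 => f0; exact: mem_set.
Qed.

Lemma Rintegral_setI_lt0 (f : T -> R) :
  Rintegral mu (D `&` [set x | f x < 0]) f
  = Rintegral mu D (fun x => Order.min (f x) 0).
Proof.
rewrite Rintegral_mkcondr; apply: eq_Rintegral => x _; rewrite /patch.
case: ifPn => [/set_mem /= f0|fN0]; first by rewrite min_l // ltW.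
by rewrite min_r // leNgt; apply: contraNN fN0 => f0; exact: mem_set.
Qed.

Lemma integrable_of_mul_gt (A : R) (w f : T -> R) :
  0 < A -> (forall x, D x -> A < w x) -> measurable_fun D f ->
  mu.-integrable D (EFin \o (fun x => w x * f x)) -> mu.-integrable D (EFin \o f).
Proof.
move=> A0 Aw mf iwf.
apply: (le_integrable mD _ _ (integrableZl_EFin mD A^-1 iwf)).
  exact/measurable_EFinP.
move=> x Dx /=; have Awx := Aw x Dx.
have Ai : 0 <= A^-1 by rewrite invr_ge0 ltW.
rewrite lee_fin !normrM mulrA (ger0_norm Ai).
apply: ler_peMl => //; rewrite ger0_norm; last by lra.
by rewrite ler_pdivlMl // mulr1 ltW.
Qed.

Lemma sign_parts_bounds (A B : R) (w f : T -> R) :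
  0 < A -> (forall x, D x -> A < w x < B) -> measurable_fun D f ->
  mu.-integrable D (EFin \o (fun x => w x * f x)) ->
  Rintegral mu D (fun x => w x * f x) = 0 ->
  A * Rintegral mu (D `&` [set x | 0 < f x]) f
    + B * Rintegral mu (D `&` [set x | f x < 0]) f <= 0
  <= B * Rintegral mu (D `&` [set x | 0 < f x]) f
    + A * Rintegral mu (D `&` [set x | f x < 0]) f.
Proof.
move=> A0 wAB mf iwf wf0.
have if_ := integrable_of_mul_gt A0 (fun x Dx => proj1 (andP (wAB x Dx))) mf iwf.
have ipart (g : T -> R) : measurable_fun D g -> (forall x, `|g x| <= `|f x|) ->
    mu.-integrable D (EFin \o g).
  move=> mg gf; apply: (le_integrable mD _ _ if_); first exact/measurable_EFinP.
  by move=> x _; rewrite lee_fin.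
have imax : mu.-integrable D (EFin \o (fun x => Order.max (f x) 0)).
  apply: ipart; first by apply: measurable_maxr => //; exact: measurable_cst.
  by move=> x; have [f0|f0] := lerP 0 (f x); rewrite ?normr0.
have imin : mu.-integrable D (EFin \o (fun x => Order.min (f x) 0)).
  apply: ipart; first by apply: measurable_minr => //; exact: measurable_cst.
  by move=> x; have [f0|f0] := lerP 0 (f x); rewrite ?normr0.
have combo (a b : R) : Rintegral mu D (fun x =>
    a * Order.max (f x) 0 + b * Order.min (f x) 0)
    = a * Rintegral mu D (fun x => Order.max (f x) 0)
      + b * Rintegral mu D (fun x => Order.min (f x) 0).
  by rewrite RintegralD ?RintegralZl //; apply: (integrableZl_EFin mD).
have icombo (a b : R) : mu.-integrable D (EFin \o (fun x =>
    a * Order.max (f x) 0 + b * Order.min (f x) 0)).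
  by apply: (integrableD_EFin mD); apply: (integrableZl_EFin mD).
have bounds x (Dx : D x) := mulr_between_maxmin (f x) (wAB x Dx).
have lo := le_Rintegral mD (icombo A B) iwf (fun x Dx => proj1 (andP (bounds x Dx))).
have hi := le_Rintegral mD iwf (icombo B A) (fun x Dx => proj2 (andP (bounds x Dx))).
rewrite wf0 in lo hi.
by rewrite Rintegral_setI_gt0 Rintegral_setI_lt0 -!combo lo hi.
Qed.

End sign_parts.

Lemma sqr_le_add3 (R : realDomainType) (a b c : R) :
  [/\ a ^+ 2 <= a ^+ 2 + b ^+ 2 + c ^+ 2, b ^+ 2 <= a ^+ 2 + b ^+ 2 + c ^+ 2
    & c ^+ 2 <= a ^+ 2 + b ^+ 2 + c ^+ 2].
Proof. by have := sqr_ge0 a; have := sqr_ge0 b; have := sqr_ge0 c; split; lra. Qed.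

Section weak_formulation.
Variables (R : realType) (Om : set (R * R)).
Hypothesis mOm : measurable (Om : set (measurableTypeR R * measurableTypeR R)).
Local Notation leb2 := (@leb2 R).

(* The weak equation, stated for test functions, passes to the limit along the
   test functions approximating [u] in H^1_0. *)
Lemma weak_neg_laplacian_H10 (u g1 g2 v1 v2 w : R * R -> R) :
  H10_grad Om u g1 g2 -> L2 Om v1 -> L2 Om v2 -> L2 Om w ->
  weak_neg_laplacian Om v1 v2 w ->
  Rintegral leb2 Om (fun x => v1 x * g1 x) + Rintegral leb2 Om (fun x => v2 x * g2 x)
  = Rintegral leb2 Om (fun x => w x * u x).
Proof.
move=> [[Lu [Lg1 Lg2]] _ _ [psi [tpsi cvpsi]]] Lv1 Lv2 Lw eqw.
pose G n x := (psi n x - u x) ^+ 2 + ('D_(e1 R) (psi n) x - g1 x) ^+ 2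
  + ('D_(e2 R) (psi n) x - g2 x) ^+ 2.
have m0 n : measurable_fun Om (psi n) by case: (test_fun_measurable mOm (tpsi n)).
have m1 n : measurable_fun Om ('D_(e1 R) (psi n)).
  by case: (test_fun_measurable mOm (tpsi n)).
have m2 n : measurable_fun Om ('D_(e2 R) (psi n)).
  by case: (test_fun_measurable mOm (tpsi n)).
have mG n : measurable_fun Om (G n).
  by apply: measurable_funD; [apply: measurable_funD|]; apply: measurable_funX;
    apply: measurable_funB => //; [case: Lu|case: Lg1|case: Lg2].
have [_ cu] := cvg_Rintegral_mul mOm m0 mG Lu Lw
  (fun n x _ => let: And3 h _ _ := sqr_le_add3 _ _ _ in h) cvpsi.
have [i1 c1] := cvg_Rintegral_mul mOm m1 mG Lg1 Lv1
  (fun n x _ => let: And3 _ h _ := sqr_le_add3 _ _ _ in h) cvpsi.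
have [i2 c2] := cvg_Rintegral_mul mOm m2 mG Lg2 Lv2
  (fun n x _ => let: And3 _ _ h := sqr_le_add3 _ _ _ in h) cvpsi.
have eq_seq : {near \oo, (fun n =>
    Rintegral leb2 Om (fun x => v1 x * 'D_(e1 R) (psi n) x)
    + Rintegral leb2 Om (fun x => v2 x * 'D_(e2 R) (psi n) x)) =1
    (fun n => Rintegral leb2 Om (fun x => w x * psi n x))}.
  by near=> n; rewrite /= -eqw // RintegralD //; near: n.
exact: cvg_unique (cvg_trans (near_eq_cvg eq_seq) (cvgD c1 c2)) cu.
Unshelve. all: by end_near.
Qed.

(* Testing each equation against the other's solution, the two gradient
   pairings coincide, leaving only the perturbation term. *)
Lemma perturbation_orthogonal_eigenfunction (lam : R) (vt : R -> R)
    (phi_j phi : R * R -> R) :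
  dirichlet_eigenpair Om lam phi_j ->
  weak_dirichlet_solution Om (fun eta => lam * eta + vt eta) phi ->
  leb2.-integrable Om (EFin \o (fun x => vt (phi x) * phi_j x)) /\
  Rintegral leb2 Om (fun x => vt (phi x) * phi_j x) = 0.
Proof.
move=> [g1 [g2 [Hj _ eig]]] [h1 [h2 [H LF sol]]].
have [[Lj [Lg1 Lg2]] _ _ _] := Hj.
have [[L [Lh1 Lh2]] _ _ _] := H.
have Llj : L2 Om (fun x => lam * phi_j x).
  case: Lj => mj ij; split; first exact: measurable_funM.
  apply: eq_integrable (integrableZl mOm (lam ^+ 2) ij) => // x _ /=.
  by rewrite -EFinM exprMn.
have iF := integrable_mul_square_integrable mOm LF Lj.
have iL := integrable_mul_square_integrable mOm Llj L.
have eqw : Rintegral leb2 Om (fun x => vt (phi x) * phi_j x) =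
    Rintegral leb2 Om (fun x => (lam * phi x + vt (phi x)) * phi_j x)
    - Rintegral leb2 Om (fun x => lam * phi_j x * phi x).
  by rewrite -RintegralB //; apply: eq_Rintegral => x _; ring.
split; last first.
  rewrite eqw -(weak_neg_laplacian_H10 Hj Lh1 Lh2 LF sol).
  rewrite -(weak_neg_laplacian_H10 H Lg1 Lg2 Llj eig).
  have swap (a b : R * R -> R) : Rintegral leb2 Om (fun x => a x * b x)
      = Rintegral leb2 Om (fun x => b x * a x).
    by apply: eq_Rintegral => x _; rewrite mulrC.
  by rewrite (swap h1) (swap h2) subrr.
apply: eq_integrable (integrableD_EFin mOm iF (integrableZl_EFin mOm (-1) iL)) => // x _ /=.
by congr EFin; ring.
Qed.
End weak_formulation.

Theorem proposition4p4 (R : realType) (Om : set (R * R)) (eps : R)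
  (lam : R) (phi_j : R * R -> R) :
  open Om -> bounded_set2 Om -> simply_connected2 Om ->
  0 < eps < 1 -> C2eps_boundary eps Om ->
  dirichlet_eigenpair Om lam phi_j ->
  Rintegral (@leb2 R) [set x | Om x /\ 0 < phi_j x] phi_j
    != - Rintegral (@leb2 R) [set x | Om x /\ phi_j x < 0] phi_j ->
  exists A B : R, 0 < A < B /\
    forall vt : R -> R, (forall eta, A < vt eta < B) ->
      ~ exists phi : R * R -> R,
          weak_dirichlet_solution Om (fun eta => lam * eta + vt eta) phi.
Proof.
move=> oOm _ _ _ _ eig hP.
have mOm := open_measurable2 oOm.
have [g1 [g2 [[[[mphi_j _] _] _ _ _] _ _]]] := eig.
set Pp := Rintegral (@leb2 R) [set x | Om x /\ 0 < phi_j x] phi_j in hP.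
set Pm := Rintegral (@leb2 R) [set x | Om x /\ phi_j x < 0] phi_j in hP.
have bounds A B vt : 0 < A -> (forall eta, A < vt eta < B) ->
    (exists phi, weak_dirichlet_solution Om (fun eta => lam * eta + vt eta) phi) ->
    A * Pp + B * Pm <= 0 <= B * Pp + A * Pm.
  move=> A0 vtAB [phi sol].
  have [iw w0] := perturbation_orthogonal_eigenfunction mOm eig sol.
  by have := sign_parts_bounds mOm A0 (fun x _ => vtAB (phi x)) mphi_j iw w0.
move: hP; rewrite neq_lt => /orP[lt|lt].
- have [B B1 BPp] := exists_gt1_mulr_lt lt.
  exists 1, B; split; first by rewrite ltr01.
  by move=> vt vtAB /(bounds _ _ _ ltr01 vtAB) /andP[_]; lra.
- have [B B1 BPm] := exists_gt1_mulr_lt lt.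
  exists 1, B; split; first by rewrite ltr01.
  by move=> vt vtAB /(bounds _ _ _ ltr01 vtAB) /andP[+ _]; lra.
Qed.
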